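(* Let $G$ be $\mathrm{Sym}(d)$ or $\mathrm{Alt}(d)$ for some $d\ge 2$, acting naturally on $X=\{1,\dots,d\}$. Then the natural action does not extend properly to a $2$-by-block-transitive action: there is no $G$-set $\Omega$ with a $G$-equivariant surjection $\Omega\to X$ whose fibres have size at least $2$ such that $G$ acts transitively on ordered pairs of points of $\Omega$ lying in distinct fibres. *)

From mathcomp Require Import all_boot all_order all_fingroup all_solvable.
Set Implicit Arguments. Unset Strict Implicit. Unset Printing Implicit Defensive.
Local Open Scope group_scope.

Definition is_G_action (d : nat) (G : {group {perm 'I_d}}) (Omega : Type)
  (to : Omega -> {perm 'I_d} -> Omega) : Prop :=
  (forall x, to x 1 = x) /\
  (forall x g h, g \in G -> h \in G -> to x (g * h) = to (to x g) h).

Definition proper_2_by_block_transitive_extension (d : nat)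
  (G : {group {perm 'I_d}}) (Omega : Type)
  (to : Omega -> {perm 'I_d} -> Omega) (pi : Omega -> 'I_d) : Prop :=
  [/\ is_G_action G to,
      (forall x g, g \in G -> pi (to x g) = g (pi x)),
      (forall i : 'I_d, exists x y : Omega, [/\ x <> y, pi x = i & pi y = i])
      & (forall x y x' y' : Omega, pi x <> pi y -> pi x' <> pi y' ->
           exists2 g, g \in G & to x g = x' /\ to y g = y')].

(* Let i != j, let x lie over i, and let c in G send j to i.  Transitivity on
   pairs in distinct fibres lets the pointwise stabiliser G_ij of {i, j} move
   any point over i to any other while fixing a point z over j; hence every
   point over i is z.(c^a) for some a in G_ij, and the index of the stabiliser
   G_x in G_i is at most the size of the G_ij-conjugacy class of c.  Since
   fibres have two points this index exceeds 1.
   - Sym(d): c = (i j) is centralised by G_ij, a contradiction.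
   - Alt(d), d >= 6: for a 3-cycle c the index is at most d - 2, but the
     simple group G_i = Alt(d-1) cannot act faithfully on so few cosets.
   - Alt(d), d <= 5: G_ij has order at most 3, yet G_ij :&: G_x is a
     nontrivial proper subgroup of it. *)

From mathcomp Require Import all_boot all_order all_fingroup all_solvable.
From mathcomp Require Import boolp zify.
Set Implicit Arguments. Unset Strict Implicit. Unset Printing Implicit Defensive.
Local Open Scope group_scope.

Lemma simple_card_le_fact_index (gT : finGroupType) (G S : {group gT}) :
  simple G -> S \proper G -> #|G| <= #|G : S|`!.
Proof.
move=> simG /andP[sSG nsGS].
have nRG := actsRs_rcosets S G.
have ffulG : [faithful G, on rcosets S G | 'Rs].
  rewrite /faithful astabRs_rcosets.
  have /simpleP[_ /(_ _ (gcore_normal sSG))[core1|coreG]] := simG.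
    by rewrite core1 subsetIr.
  by case/negP: nsGS; rewrite -coreG gcore_sub.
rewrite (isom_card (faithful_isom nRG ffulG)) -card_perm.
apply/subset_leq_card/subsetP => _ /morphimP[a _ Ga ->].
apply/subsetP => C; rewrite inE actpermE /= /actby.
by case: (C \in _) => //=; rewrite eqxx.
Qed.

Lemma even_perm_on_id (T : finType) (U : {set T}) (p : {perm T}) :
  #|U| <= 2 -> perm_on U p -> ~~ odd_perm p -> p = 1.
Proof.
move=> U2 onU even_p.
have [x /= px_x|fix_p] := pickP [pred x | p x != x]; last first.
  by apply/permP => x; rewrite perm1; apply/eqP/negbFE/fix_p.
have Ux : x \in U by apply: (subsetP onU); rewrite inE.
have Upx : p x \in U by rewrite (perm_closed _ onU).
pose q : {perm T} := p * tperm x (p x).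
have qx : q x = x by rewrite permM tpermR.
have onUq : perm_on U q.
  apply: perm_onM onU (subset_trans (tperm_on _ _) _).
  by apply/subsetP => y /set2P[]->.
have onUxq : perm_on (U :\ x) q.
  apply/subsetP => y qy; rewrite !inE (subsetP onUq _ qy) andbT.
  by apply: contraTneq qy => ->; rewrite inE /= qx eqxx.
have q1 : q = 1.
  apply: (perm_on_id onUxq).
  by move: U2; rewrite (cardsD1 x) Ux.
have p_tperm : p = tperm x (p x).
  by rewrite -{1}[p](mulgK (tperm x (p x))) -/q q1 mul1g tpermV.
by move: even_p; rewrite p_tperm odd_tperm eq_sym px_x.
Qed.

Lemma perm_on_astab (T : finType) (S : {set T}) (p : {perm T}) :
  p \in 'C(S | 'P) -> perm_on (~: S) p.
Proof.
by move=> /astabP fixS; apply/subsetP => y; rewrite !inE; apply: contra => /fixS /eqP.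
Qed.

Lemma stab2P (T : finType) (A : {set {perm T}}) (i j : T) (p : {perm T}) :
  reflect [/\ p \in A, p i = i & p j = j] (p \in 'C_A([set i; j] | 'P)).
Proof.
rewrite inE; apply: (iffP andP) => [[Ap /astabP fixij]|[Ap pi pj]].
  by split=> //; apply: fixij; rewrite !inE eqxx ?orbT.
by split=> //; apply/astabP => y /set2P[]->.
Qed.

Lemma tperm_cent_stab2 (T : finType) (A : {set {perm T}}) (i j : T) :
  tperm i j \in 'C('C_A([set i; j] | 'P)).
Proof. by apply/centP => a /stab2P[_ ai aj]; rewrite /commute conjgC tpermJ ai aj. Qed.

Lemma card_class_3cycle_stab2 (T : finType) (A : {set {perm T}}) (i j k : T) :
  i != j -> k \notin [set i; j] ->
  #|(tperm i j * tperm j k) ^: 'C_A([set i; j] | 'P)| <= #|T| - 2.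
Proof.
move=> ij kij; rewrite -(cardsC [set i; j]) cards2 ij addKn.
apply: leq_trans (subset_leq_card _) (leq_imset_card (fun m => tperm i j * tperm j m) _).
apply/subsetP => _ /imsetP[a /stab2P[_ ai aj] ->]; apply/imsetP; exists (a k).
  by move: kij; rewrite !inE -(inj_eq (@perm_inj _ a)) ai -[k == j](inj_eq (@perm_inj _ a)) aj.
by rewrite conjMg !tpermJ ai aj.
Qed.

Lemma Alt_astab_trivial (T : finType) (S : {set T}) :
  #|T| <= #|S| + 2 -> 'C_('Alt_T)(S | 'P) = 1.
Proof.
move=> TS; apply/trivgP/subsetP => p /setIP[Alt_p fixS]; rewrite inE; apply/eqP.
apply: (even_perm_on_id _ (perm_on_astab fixS)); last by rewrite -Alt_even.
by have := cardsC S; lia.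
Qed.

Lemma card_Alt_stab2_le3 (T : finType) (i j : T) :
  i != j -> #|T| <= 5 -> #|'C_('Alt_T)([set i; j] | 'P)| <= 3.
Proof.
move=> ij T5; have card_ij : #|[set i; j]| = 2 by rewrite cards2 ij.
have [ij_all|[k kij]] := set_0Vmem (~: [set i; j]).
  rewrite Alt_astab_trivial ?cards1 //.
  by have := cardsC [set i; j]; rewrite ij_all cards0; lia.
have card_ijk : #|[set i; j; k]| = 3.
  by move: kij; rewrite inE (setUC [set i; j]) cardsU1 cards2 ij => ->.
apply: leq_trans (_ : #|~: [set i; j]| <= 3); last by have := cardsC [set i; j]; lia.
rewrite -(@card_in_imset _ _ (fun p : {perm T} => p k)); last first.
  move=> p q /stab2P[Alt_p pi pj] /stab2P[Alt_q qi qj] pk_qk.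
  apply/eqP; rewrite eq_mulgV1.
  have : p * q^-1 \in 'C_('Alt_T)([set i; j; k] | 'P).
    apply/setIP; split; first by rewrite groupM ?groupV.
    apply/astabP => y /=; rewrite !inE -orbA apermE permM => /or3P[]/eqP->.
    - by rewrite pi; exact: (canLR (permK q) (esym qi)).
    - by rewrite pj; exact: (canLR (permK q) (esym qj)).
    - by rewrite pk_qk; exact: (canLR (permK q) erefl).
  by rewrite Alt_astab_trivial ?card_ijk // => /set1P/eqP.
apply/subset_leq_card/subsetP => _ /imsetP[p /stab2P[_ pi pj] ->].
by move: kij; rewrite !inE -(inj_eq (@perm_inj _ p)) pi -[k == j](inj_eq (@perm_inj _ p)) pj.
Qed.

Lemma simple_Alt_stab1 (T : finType) (i : T) :
  5 < #|T| -> simple 'C_('Alt_T)[i | 'P].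
Proof.
by move=> T6; rewrite (isog_simple (rfd_iso i)); apply: simple_Alt5; rewrite card_sig cardC1; lia.
Qed.

Lemma card_Alt_stab1_gt (T : finType) (i : T) :
  3 < #|T| -> (#|T| - 2)`! < #|'C_('Alt_T)[i | 'P]|.
Proof.
move=> T4; have := card_Alt (T := {y | y != i}).
rewrite -(card_isog (rfd_iso i)) card_sig cardC1 => /(_ ltac:(lia)).
have -> : #|T|.-1 = (#|T| - 2).+1 by lia.
rewrite factS => card_stab.
by rewrite -(ltn_pmul2l (isT : 0 < 2)) card_stab ltn_pmul2r ?fact_gt0 //; lia.
Qed.

Section ProperTwoByBlockTransitiveExtension.

Variables (d : nat) (G : {group {perm 'I_d}}) (Omega : Type).
Variables (to : Omega -> {perm 'I_d} -> Omega) (pi : Omega -> 'I_d).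
Hypothesis ext : proper_2_by_block_transitive_extension G to pi.

Let act1 x : to x 1 = x.
Proof. by case: ext => [[]]. Qed.

Let actM x g h : g \in G -> h \in G -> to x (g * h) = to (to x g) h.
Proof. by case: ext => [[_ actM]] *; apply: actM. Qed.

Let actK x g : g \in G -> to (to x g) g^-1 = x.
Proof. by move=> Gg; rewrite -actM ?groupV // mulgV act1. Qed.

Let pi_act x g : g \in G -> pi (to x g) = g (pi x).
Proof. by case: ext => _ pi_act *; apply: pi_act. Qed.

Let fibre_other i x : exists2 x', pi x' = i & x' <> x.
Proof.
case: ext => _ _ /(_ i)[x1 [x2 [x12 x1i x2i]]] _.
have [x1x|] := pselect (x1 = x); last by exists x1.
by exists x2 => // x2x; apply: x12; rewrite x1x x2x.
Qed.

Let fibre_pt i : exists x, pi x = i.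
Proof. by case: ext => _ _ /(_ i)[x [_ [_ xi _]]] _; exists x. Qed.

Let trans2 x y x' y' : pi x != pi y -> pi x' != pi y' ->
  exists2 g, g \in G & to x g = x' /\ to y g = y'.
Proof. by case: ext => _ _ _ trans2 /eqP xy /eqP x'y'; apply: trans2. Qed.

(* Omega has no decidable equality, so membership is decided classically. *)
Definition ext_stab x : {set {perm 'I_d}} := [set g in G | `[< to x g = x >]].

Lemma ext_stabP x g : reflect (g \in G /\ to x g = x) (g \in ext_stab x).
Proof. by rewrite inE; apply: (iffP andP) => -[Gg /asboolP]. Qed.

Lemma ext_stab_group_set x : group_set (ext_stab x).
Proof.
apply/group_setP; split=> [|g h /ext_stabP[Gg xg] /ext_stabP[Gh xh]].
  by apply/ext_stabP; rewrite group1 act1.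
by apply/ext_stabP; rewrite groupM // actM // xg xh.
Qed.

Canonical ext_stab_group x := Group (ext_stab_group_set x).

Lemma ext_fix_move i j x y : i != j -> pi x = i -> pi y = j ->
  exists2 h, h \in 'C_G([set i; j] | 'P) & to y h = y /\ to x h <> x.
Proof.
move=> ij xi yj; have [x' x'i x'x] := fibre_other i x.
have := trans2 (x := x) (y := y) (x' := x') (y' := y).
rewrite xi yj x'i => /(_ ij ij)[h Gh [xh yh]].
exists h; last by split=> // xhx; apply: x'x; rewrite -xh.
by apply/stab2P; rewrite -{1}xi -{1}yj -!pi_act // xh yh x'i.
Qed.

Lemma ext_fibre_conj i j z c w : i != j -> pi z = j -> c \in G -> c j = i ->
  pi w = i -> exists2 a, a \in 'C_G([set i; j] | 'P) & w = to z (c ^ a).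
Proof.
move=> ij zj Gc cj wi; have zci : pi (to z c) = i by rewrite pi_act // zj.
have := trans2 (x := z) (y := to z c) (x' := z) (y' := w).
rewrite zj zci wi eq_sym => /(_ ij ij)[a Ga [za zca]].
exists a; first by apply/stab2P; rewrite -{1}zci -{1}zj -!pi_act // za zca wi.
by rewrite /conjg !actM ?groupV ?groupM // -{1}za (actK z Ga).
Qed.

Lemma ext_index_stab_le_class i j x c : i != j -> pi x = i -> c \in G -> c j = i ->
  #|'C_G[i | 'P] : ext_stab x| <= #|c ^: 'C_G([set i; j] | 'P)|.
Proof.
move=> ij xi Gc cj; have Gc' : c^-1 \in G by rewrite groupV.
have zj : pi (to x c^-1) = j by rewrite pi_act // xi -cj permK.
apply: leq_trans (leq_imset_card (fun y => ext_stab x :* (c^-1 * y)) _).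
apply/subset_leq_card/subsetP => _ /imsetP[g /setIP[Gg /astab1P gi] ->].
have wi : pi (to x g) = i by rewrite pi_act // xi.
have [a Ha w_ca] := ext_fibre_conj ij zj Gc cj wi; have /stab2P[Ga _ _] := Ha.
have Gca : c^-1 * c ^ a \in G by rewrite groupM ?groupJ.
have x_ca : to x (c^-1 * c ^ a) = to x g by rewrite actM ?groupJ // -w_ca.
apply/imsetP; exists (c ^ a); first exact: memJ_class.
rewrite rcosetE; apply/rcoset_eqP; rewrite mem_rcoset; apply/ext_stabP.
by rewrite groupM ?groupV // actM ?groupV // -x_ca (actK x Gca).
Qed.

Lemma ext_stab1_not_sub i j x :
  i != j -> pi x = i -> ~~ ('C_G[i | 'P] \subset ext_stab x).
Proof.
move=> ij xi; have [y yj] := fibre_pt j.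
have [h /stab2P[Gh hi _] [_ xh]] := ext_fix_move ij xi yj.
apply/subsetPn; exists h; first by apply/setIP; split; last exact/astab1P.
by apply/ext_stabP => -[].
Qed.

Lemma ext_class_gt1 i j c : i != j -> c \in G -> c j = i ->
  1 < #|c ^: 'C_G([set i; j] | 'P)|.
Proof.
move=> ij Gc cj; have [x xi] := fibre_pt i.
apply: leq_trans (ext_index_stab_le_class ij xi Gc cj).
by rewrite indexg_gt1 (ext_stab1_not_sub ij xi).
Qed.

Lemma ext_no_tperm i j : i != j -> tperm i j \notin G.
Proof.
move=> ij; apply/negP => Gt; have := ext_class_gt1 ij Gt (tpermR i j).
by rewrite (cent_classP _ _ (tperm_cent_stab2 _ _ _)) cards1.
Qed.

Lemma ext_card_stab2_ge4 i j : i != j -> 4 <= #|'C_G([set i; j] | 'P)|.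
Proof.
move=> ij; have [x xi] := fibre_pt i; have [y yj] := fibre_pt j.
set H := 'C_G([set i; j] | 'P); set A := (H :&: ext_stab x)%G.
have A_gt1 : 1 < #|A|.
  have ji : j != i by rewrite eq_sym.
  have [h Hh [xh yh]] := ext_fix_move ji yj xi; rewrite setUC in Hh.
  rewrite cardG_gt1; apply/trivgPn; exists h.
    by apply/setIP; split=> //; apply/ext_stabP; split=> //; case/stab2P: Hh.
  by apply/eqP => h1; apply: yh; rewrite h1 act1.
have index_gt1 : 1 < #|H : A|.
  have [h Hh [_ xh]] := ext_fix_move ij xi yj.
  rewrite indexg_gt1; apply/subsetPn; exists h => //.
  by apply/negP => /setIP[_ /ext_stabP[_ /xh]].
by rewrite -(Lagrange (subsetIl H (ext_stab x))) (leq_mul A_gt1 index_gt1).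
Qed.

Lemma ext_simple_stab1_card i j c : i != j -> c \in G -> c j = i ->
  simple 'C_G[i | 'P] -> #|'C_G[i | 'P]| <= #|c ^: 'C_G([set i; j] | 'P)|`!.
Proof.
move=> ij Gc cj simGi; have [x xi] := fibre_pt i.
have proper_S : 'C_G[i | 'P] :&: ext_stab x \proper 'C_G[i | 'P].
  by rewrite properE subsetIl subsetI subxx (ext_stab1_not_sub ij xi).
apply: leq_trans (simple_card_le_fact_index simGi proper_S) (leq_fact _).
by rewrite indexgI; apply: ext_index_stab_le_class.
Qed.

End ProperTwoByBlockTransitiveExtension.

Theorem corollary3p6 (d : nat) (G : {group {perm 'I_d}}) :
  1 < d ->
  (G :=: ('Sym_('I_d))%g \/ G :=: ('Alt_('I_d))%g) ->
  ~ exists (Omega : Type) (to : Omega -> {perm 'I_d} -> Omega)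
           (pi : Omega -> 'I_d),
      proper_2_by_block_transitive_extension G to pi.
Proof.
move=> d_gt1 Sym_or_Alt [Omega [to [pi ext]]].
pose i : 'I_d := Ordinal (ltnW d_gt1); pose j : 'I_d := Ordinal d_gt1.
have ij : i != j by [].
have [G_Sym|G_Alt] := Sym_or_Alt.
  by case/negP: (ext_no_tperm ext ij); rewrite G_Sym inE.
have [d_le5|d_gt5] := leqP d 5.
  have := ext_card_stab2_ge4 ext ij.
  by rewrite G_Alt leqNgt ltnS card_Alt_stab2_le3 ?card_ord.
have d_gt2 : 2 < d by lia.
pose k : 'I_d := Ordinal d_gt2; pose c := tperm i j * tperm j k.
have Gc : c \in G by rewrite G_Alt Alt_even odd_permM !odd_tperm.
have cj : c j = i by rewrite permM tpermR tpermD.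
have kij : k \notin [set i; j] by rewrite !inE.
have simple_Gi : simple 'C_G[i | 'P] by rewrite G_Alt simple_Alt_stab1 ?card_ord.
have card_Gi : (d - 2)`! < #|'C_G[i | 'P]|.
  by have := card_Alt_stab1_gt i; rewrite G_Alt card_ord; apply; lia.
have card_class : #|c ^: 'C_G([set i; j] | 'P)| <= d - 2.
  by have := card_class_3cycle_stab2 G ij kij; rewrite card_ord.
have := ext_simple_stab1_card ext ij Gc cj simple_Gi.
by rewrite leqNgt (leq_ltn_trans (leq_fact card_class) card_Gi).
Qed.
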